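(* Let $(Y,\sigma_Y)$ be an infinite mixing shift of finite type. Then there is a closed $\sigma_Y$-invariant subset $Z\subseteq Y$ such that $(Z,\sigma_Y|_Z)$ is a CAM $\mathbb{Z}$-system.
   Context: A $\mathbb{Z}$-system $(X,T)$ is a compact metric space $X$ with a homeomorphism $T$. It is topologically transitive if for all nonempty open $U,V$ there is $n$ with $T^nU\cap V\neq\emptyset$; the action is faithful if $T^n=\mathrm{id}$ only for $n=0$. A point is periodic if its orbit is finite. The system is chaotic almost minimal (CAM) if: (1) it is topologically transitive and the action is faithful; (2) the periodic points are dense in $X$; (3) every proper closed $T$-invariant subset of $X$ is finite. A shift of finite type is a subshift of $\mathcal{A}^{\mathbb{Z}}$ ($\mathcal{A}$ finite) defined by forbidding a finite set of words; it is mixing if for all nonempty open $U,V$ there is $N$ with $\sigma^nU\cap V\neq\emptyset$ for all $n\ge N$. *)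

From Stdlib Require Import ZArith List.
Import ListNotations.
Open Scope Z_scope.

Section Shift.
Variable A : Type.

Definition config := Z -> A.
Definition cset := config -> Prop.

Definition shiftn (n : Z) (x : config) : config := fun i => x (i + n).

(* x and y agree on the window [-N, N]; the sets {y | agree x y N} form a
   neighbourhood basis of x for the product (= standard metric) topology *)
Definition agree (x y : config) (N : nat) : Prop :=
  forall i, Z.abs i <= Z.of_nat N -> y i = x i.

Definition relopen (S U : cset) : Prop :=
  (forall x, U x -> S x) /\
  forall x, U x -> exists N : nat, forall y, S y -> agree x y N -> U y.

Definition closed (C : cset) : Prop :=
  forall x, (forall N : nat, exists y, C y /\ agree x y N) -> C x.

Definition invariant (C : cset) : Prop :=
  forall x, C x <-> C (shiftn 1 x).

Definition finite_set (C : cset) : Prop :=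
  exists l : list config, forall x, C x -> In x l.

Definition nonempty (C : cset) : Prop := exists x, C x.

Definition occurs (w : list A) (x : config) (i : Z) : Prop :=
  forall (k : nat) (a : A), nth_error w k = Some a -> x (i + Z.of_nat k) = a.

Definition SFT (Y : cset) : Prop :=
  exists F : list (list A),
    forall x, Y x <-> (forall w i, In w F -> ~ occurs w x i).

Definition mixing (Y : cset) : Prop :=
  forall U V, relopen Y U -> relopen Y V -> nonempty U -> nonempty V ->
    exists N : nat, forall n : nat, (N <= n)%nat ->
      exists x, U x /\ V (shiftn (Z.of_nat n) x).

Definition transitive (S : cset) : Prop :=
  forall U V, relopen S U -> relopen S V -> nonempty U -> nonempty V ->
    exists n : Z, exists x, U x /\ V (shiftn n x).

Definition faithful (S : cset) : Prop :=
  forall n : Z, (forall x, S x -> shiftn n x = x) -> n = 0.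

Definition periodic (x : config) : Prop :=
  finite_set (fun y => exists n : Z, y = shiftn n x).

Definition dense_periodic (S : cset) : Prop :=
  forall U, relopen S U -> nonempty U -> exists x, U x /\ periodic x.

(* chaotic almost minimal system (S, sigma|_S), S closed invariant *)
Definition CAM (S : cset) : Prop :=
  transitive S /\ faithful S /\ dense_periodic S /\
  (forall C, (forall x, C x -> S x) -> closed C -> invariant C ->
     (exists x, S x /\ ~ C x) -> finite_set C).

End Shift.

Arguments shiftn {A}.
Arguments agree {A}.
Arguments relopen {A}.
Arguments closed {A}.
Arguments invariant {A}.
Arguments finite_set {A}.
Arguments nonempty {A}.
Arguments occurs {A}.
Arguments SFT {A}.
Arguments mixing {A}.
Arguments transitive {A}.
Arguments faithful {A}.
Arguments periodic {A}.
Arguments dense_periodic {A}.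
Arguments CAM {A}.

From Stdlib Require Import ZArith List Lia Classical FunctionalExtensionality.
Import ListNotations.
Open Scope Z_scope.

(* Let [K] bound the lengths of the forbidden words of [Y].  Mixing produces loops through
   a fixed [K]-block: a word [p] whose periodic point lies in [Y], and a word [c] passing
   through a block [w] that never occurs in the periodic point of [p] ([w] exists because
   [Y] is infinite).  Equal-length powers [P] of [p] and [M] of [c] share their first [K]
   letters, so every concatenation of [P]'s and [M]'s lies in [Y].

   Iterating a substitution on the letters [Plain i] and [Mark] yields words of every
   level, the marker word of level [j+1] containing every allowed pair of level-[j] words,
   and [Z] is the set of points that are allowed concatenations of level-[j] words for
   every [j].  Every window of a point of [Z] lies in a marker word, and marker words occur
   in the periodic points of plain words: hence periodic points are dense and [Z] is
   transitive.  A closed invariant set omitting a point of [Z] omits some marker word, so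
   its points are tiled by one of finitely many plain words and it is finite.  Finally [M]
   and long powers of [P] both occur in a plain word; a period [n] of all of [Z] would let
   the occurrence of [M] be read inside [periodize P], which [w] forbids. *)

Lemma app_inv_length {X : Type} (x1 x2 y1 y2 : list X) :
  x1 ++ x2 = y1 ++ y2 -> length x1 = length y1 -> x1 = y1 /\ x2 = y2.
Proof.
  revert y1; induction x1 as [|a x1 IH]; intros [|b y1] H Hl; simpl in *; try discriminate.
  - split; auto.
  - injection H as -> H; injection Hl as Hl.
    destruct (IH y1 H Hl) as [-> ->]; split; reflexivity.
Qed.

Lemma length_flat_map_const {X Y : Type} (f : X -> list Y) (c : nat) l :
  (forall x, length (f x) = c) -> length (flat_map f l) = (length l * c)%nat.
Proof.
  intros H; induction l as [|a l IH]; simpl; [reflexivity|].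
  rewrite length_app, H, IH; lia.
Qed.

Lemma skipn_flat_map_const {X Y : Type} (f : X -> list Y) (c : nat) k l :
  (forall x, length (f x) = c) -> skipn (k * c) (flat_map f l) = flat_map f (skipn k l).
Proof.
  intros H; revert l; induction k as [|k IH]; intros [|a l]; try reflexivity.
  - apply skipn_nil.
  - simpl flat_map; replace (S k * c)%nat with (c + k * c)%nat by lia.
    rewrite skipn_app, H, skipn_all2 by (rewrite H; lia).
    replace (c + k * c - c)%nat with (k * c)%nat by lia; apply IH.
Qed.

Definition pow {X : Type} (W : list X) (k : nat) : list X := concat (repeat W k).

Lemma flat_map_repeat {X Y : Type} (f : X -> list Y) a n :
  flat_map f (repeat a n) = pow (f a) n.
Proof. unfold pow; induction n as [|n IH]; simpl; [reflexivity|]; rewrite IH; reflexivity. Qed.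

Lemma length_pow {X : Type} (W : list X) k : length (pow W k) = (k * length W)%nat.
Proof. unfold pow; induction k as [|k IH]; simpl; [reflexivity|]; rewrite length_app, IH; lia. Qed.

Lemma pow_mul {X : Type} (W : list X) a b : pow (pow W a) b = pow W (b * a).
Proof.
  unfold pow; induction b as [|b IH]; simpl; [reflexivity|].
  rewrite IH, repeat_app, concat_app; reflexivity.
Qed.

Lemma firstn_pow {X : Type} (W : list X) k n :
  (n <= length W)%nat -> (1 <= k)%nat -> firstn n (pow W k) = firstn n W.
Proof.
  intros Hn Hk; destruct k as [|k]; [lia|]; unfold pow; simpl.
  rewrite firstn_app; replace (n - length W)%nat with 0%nat by lia.
  apply app_nil_r.
Qed.

Definition factor {X : Type} (u v : list X) : Prop := exists a b, v = a ++ u ++ b.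

Lemma factor_refl {X : Type} (u : list X) : factor u u.
Proof. exists [], []; rewrite app_nil_r; reflexivity. Qed.

Lemma factor_trans {X : Type} (u v w : list X) : factor u v -> factor v w -> factor u w.
Proof.
  intros [a [b ->]] [c [e ->]]; exists (c ++ a), (b ++ e).
  rewrite !app_assoc; reflexivity.
Qed.

Lemma factor_app_l {X : Type} (u v : list X) : factor u (u ++ v).
Proof. exists [], v; reflexivity. Qed.

Lemma factor_pow {X : Type} (W : list X) k : (1 <= k)%nat -> factor W (pow W k).
Proof. intros Hk; destruct k as [|k]; [lia|]; apply factor_app_l. Qed.

Lemma factor_flat_map {X Y : Type} (f : X -> list Y) pre a b post :
  factor (f a ++ f b) (flat_map f (pre ++ a :: b :: post)).
Proof.
  rewrite flat_map_app; simpl; exists (flat_map f pre), (flat_map f post).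
  rewrite !app_assoc; reflexivity.
Qed.

(** * Substitution on the letters [Plain i] and [Mark] *)

Inductive letter := Plain (i : nat) | Mark.

Definition allowed (a b : letter) : Prop := a = b \/ a = Mark \/ b = Mark.

Fixpoint chain (l : list letter) : Prop :=
  match l with
  | [] => True
  | a :: l' => match l' with [] => True | b :: _ => allowed a b /\ chain l' end
  end.

Lemma chain_repeat c n : chain (repeat c n).
Proof.
  induction n as [|[|n] IH]; simpl in *; auto.
  split; [left; reflexivity | exact IH].
Qed.

Lemma chain_skipn k l : chain l -> chain (skipn k l).
Proof.
  revert l; induction k as [|k IH]; intros [|a l] H; simpl; auto.
  apply IH; destruct l; simpl in *; tauto.
Qed.

Lemma chain_app_allowed l1 a b l2 :
  chain (l1 ++ [a]) -> allowed a b -> chain (b :: l2) -> chain (l1 ++ a :: b :: l2).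
Proof.
  induction l1 as [|c [|e l1] IH]; simpl; [tauto | tauto |].
  intros [Hce H1] Hab H2; split; [exact Hce | exact (IH H1 Hab H2)].
Qed.

Definition block_length (j : nat) : nat := 3 * j + 5.

Definition mark_unit (i : nat) : list letter := [Plain i; Plain i; Mark].

Definition expand (j : nat) (a : letter) : list letter :=
  match a with
  | Plain i => if (i <=? j)%nat then repeat (Plain i) (block_length j)
               else repeat Mark (block_length j)
  | Mark => Mark :: flat_map mark_unit (seq 0 (S j)) ++ [Mark]
  end.

Lemma length_expand j a : length (expand j a) = block_length j.
Proof.
  destruct a as [i|]; simpl.
  - destruct (i <=? j)%nat; apply repeat_length.
  - rewrite length_app, (length_flat_map_const mark_unit 3), length_seq by reflexivity.
    unfold block_length; simpl; lia.
Qed.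

Definition edge (j : nat) (a : letter) : letter :=
  match a with Plain i => if (i <=? j)%nat then Plain i else Mark | Mark => Mark end.

Lemma expand_edges j a : exists mid, expand j a = edge j a :: mid ++ [edge j a].
Proof.
  destruct a as [i|]; [|eexists; reflexivity].
  exists (repeat (edge j (Plain i)) (3 * j + 3)).
  rewrite <- repeat_cons; simpl; unfold block_length.
  replace (3 * j + 5)%nat with (S (S (3 * j + 3))) by lia.
  destruct (i <=? j)%nat; reflexivity.
Qed.

Lemma allowed_edge j a b : allowed a b -> allowed (edge j a) (edge j b).
Proof. intros [<- | [-> | ->]]; [left | right; left | right; right]; reflexivity. Qed.

Lemma chain_mark_units l : chain (Mark :: flat_map mark_unit l ++ [Mark]).
Proof.
  induction l as [|i l IH]; simpl in *.
  - split; [right; left|]; auto.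
  - repeat split; auto; [right; left | left | right; right]; reflexivity.
Qed.

Lemma chain_expand j a : chain (expand j a).
Proof.
  destruct a as [i|]; [simpl; destruct (i <=? j)%nat; apply chain_repeat|].
  apply chain_mark_units.
Qed.

Lemma chain_expand_allowed j a b : allowed a b -> chain (expand j a ++ expand j b).
Proof.
  intros Hab.
  pose proof (chain_expand j a) as Ha; pose proof (chain_expand j b) as Hb.
  destruct (expand_edges j a) as [ma Ea]; destruct (expand_edges j b) as [mb Eb].
  rewrite Ea in Ha |- *; rewrite Eb in Hb |- *.
  rewrite app_comm_cons, <- app_assoc.
  apply chain_app_allowed; [exact Ha | apply allowed_edge, Hab | exact Hb].
Qed.

Lemma mark_units_snoc l : exists pre, Mark :: flat_map mark_unit l = pre ++ [Mark].
Proof.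
  induction l as [|i l [pre IH]]; [exists []; reflexivity|].
  exists (Mark :: Plain i :: Plain i :: pre); simpl; rewrite IH; reflexivity.
Qed.

Lemma expand_mark_at j i : (i <= j)%nat -> exists pre,
  expand j Mark = pre ++ Mark :: Plain i :: Plain i :: Mark ::
                  flat_map mark_unit (seq (S i) (j - i)) ++ [Mark].
Proof.
  intros H; destruct (mark_units_snoc (seq 0 i)) as [pre Hpre]; exists pre.
  change (expand j Mark) with (Mark :: flat_map mark_unit (seq 0 (S j)) ++ [Mark]).
  replace (S j) with (i + S (j - i))%nat by lia.
  rewrite seq_app, flat_map_app, <- app_assoc, app_comm_cons, Hpre, <- app_assoc.
  reflexivity.
Qed.

Lemma allowed_in_expand_mark j a b : allowed a b ->
  (forall i, a = Plain i -> (i <= j)%nat) -> (forall i, b = Plain i -> (i <= j)%nat) ->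
  exists pre post, expand j Mark = pre ++ a :: b :: post.
Proof.
  intros Hab Ha Hb.
  destruct a as [i|], b as [i'|].
  - destruct Hab as [E|[E|E]]; try discriminate; injection E as <-.
    destruct (expand_mark_at j i (Ha i eq_refl)) as [pre ->].
    exists (pre ++ [Mark]), (Mark :: flat_map mark_unit (seq (S i) (j - i)) ++ [Mark]).
    rewrite <- app_assoc; reflexivity.
  - destruct (expand_mark_at j i (Ha i eq_refl)) as [pre ->].
    exists (pre ++ [Mark; Plain i]), (flat_map mark_unit (seq (S i) (j - i)) ++ [Mark]).
    rewrite <- app_assoc; reflexivity.
  - destruct (expand_mark_at j i' (Hb i' eq_refl)) as [pre ->].
    eexists pre, _; reflexivity.
  - destruct (expand_mark_at j j (le_n j)) as [pre ->].
    rewrite Nat.sub_diag; exists (pre ++ [Mark; Plain j; Plain j]), [].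
    rewrite <- app_assoc; reflexivity.
Qed.

Section Configurations.
Variable A : Type.
Variable d : A.

Lemma shiftn_shiftn (a b : Z) (x : config A) : shiftn a (shiftn b x) = shiftn (a + b) x.
Proof. apply functional_extensionality; intro i; unfold shiftn; f_equal; lia. Qed.

Lemma shiftn_0 (x : config A) : shiftn 0 x = x.
Proof. apply functional_extensionality; intro i; unfold shiftn; f_equal; lia. Qed.

Lemma invariant_shiftn (C : config A -> Prop) : invariant C -> forall n x, C x -> C (shiftn n x).
Proof.
  intros HC n; induction n using Z.peano_ind; intros x Hx.
  - rewrite shiftn_0; exact Hx.
  - replace (Z.succ n) with (1 + n) by lia; rewrite <- shiftn_shiftn.
    apply (proj1 (HC _)), IHn, Hx.
  - apply (proj2 (HC _)); rewrite shiftn_shiftn; replace (1 + Z.pred n) with n by lia.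
    apply IHn, Hx.
Qed.

Definition window (x : config A) (s : Z) (len : nat) : list A :=
  map (fun k => x (s + Z.of_nat k)) (seq 0 len).

Lemma window_length x s len : length (window x s len) = len.
Proof. unfold window; rewrite length_map, length_seq; reflexivity. Qed.

Lemma window_nth x s len k (a : A) :
  (k < len)%nat -> nth k (window x s len) a = x (s + Z.of_nat k).
Proof.
  intros H; unfold window; set (f := fun k => x (s + Z.of_nat k)).
  rewrite (nth_indep _ a (f 0%nat)) by (rewrite length_map, length_seq; lia).
  rewrite map_nth, seq_nth by lia; reflexivity.
Qed.

Lemma window_ext x y s s' len :
  (forall k, (k < len)%nat -> x (s + Z.of_nat k) = y (s' + Z.of_nat k)) ->
  window x s len = window y s' len.
Proof.
  intros H; apply map_ext_in; intros k Hk; apply in_seq in Hk; apply H; lia.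
Qed.

Lemma window_eq_nth x y s s' len :
  window x s len = window y s' len ->
  forall k, (k < len)%nat -> x (s + Z.of_nat k) = y (s' + Z.of_nat k).
Proof.
  intros H k Hk.
  rewrite <- (window_nth x s len k (x s) Hk), <- (window_nth y s' len k (x s) Hk), H.
  reflexivity.
Qed.

Lemma window_shiftn n x s len : window (shiftn n x) s len = window x (s + n) len.
Proof. apply window_ext; intros k _; unfold shiftn; f_equal; lia. Qed.

Lemma window_cons x s len : window x s (S len) = x s :: window x (s + 1) len.
Proof.
  unfold window; simpl; rewrite <- seq_shift, map_map; f_equal; [f_equal; lia|].
  apply map_ext; intro k; f_equal; lia.
Qed.

Lemma window_app x s a b :
  window x s (a + b) = window x s a ++ window x (s + Z.of_nat a) b.
Proof.
  revert s; induction a as [|a IH]; intros s; [simpl; f_equal; lia|].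
  rewrite Nat.add_succ_l, !window_cons, IH; simpl; do 3 f_equal; lia.
Qed.

Lemma window_sub x s len k l : (k + l <= len)%nat ->
  window x (s + Z.of_nat k) l = firstn l (skipn k (window x s len)).
Proof.
  intros H; replace len with (k + (l + (len - k - l)))%nat by lia.
  rewrite !window_app, skipn_app, window_length, skipn_all2, Nat.sub_diag
    by (rewrite window_length; lia); simpl.
  rewrite firstn_app, window_length, Nat.sub_diag, firstn_all2 by (rewrite window_length; lia).
  simpl; rewrite app_nil_r; f_equal; lia.
Qed.

Lemma firstn_window x s len l : (l <= len)%nat -> firstn l (window x s len) = window x s l.
Proof.
  intros H; replace (window x s l) with (window x (s + Z.of_nat 0) l) by (f_equal; lia).
  rewrite (window_sub x s len) by lia; reflexivity.
Qed.

Lemma factor_window_sub x s len (k l : nat) : (k + l <= len)%nat ->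
  factor (window x (s + Z.of_nat k) l) (window x s len).
Proof.
  intros H; rewrite (window_sub x s len) by exact H.
  set (W := window x s len); exists (firstn k W), (skipn l (skipn k W)).
  rewrite !firstn_skipn; reflexivity.
Qed.

Lemma window_eq_sub x y s s' len (k l : nat) : (k + l <= len)%nat ->
  window x s len = window y s' len -> window x (s + Z.of_nat k) l = window y (s' + Z.of_nat k) l.
Proof. intros H E; rewrite !(window_sub _ _ len) by exact H; rewrite E; reflexivity. Qed.

Lemma window_periodic x (p : Z) : (forall i, x (i + p) = x i) ->
  forall c s l, window x (s + c * p) l = window x s l.
Proof.
  intros Hp c s l; apply window_ext; intros k _.
  revert s; induction c using Z.peano_ind; intros s.
  - f_equal; lia.
  - rewrite <- (IHc s), <- (Hp (s + c * p + Z.of_nat k)); f_equal; lia.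
  - rewrite <- (IHc s), <- (Hp (s + Z.pred c * p + Z.of_nat k)); f_equal; lia.
Qed.

Lemma factor_window x s len u : factor u (window x s len) ->
  exists s', window x s' (length u) = u.
Proof.
  intros [a [b H]]; exists (s + Z.of_nat (length a)).
  assert (Hl : length (window x s len) = (length a + length u + length b)%nat)
    by (rewrite H, !length_app; lia).
  rewrite window_length in Hl.
  rewrite (window_sub x s len) by lia; rewrite H.
  rewrite skipn_app, skipn_all, Nat.sub_diag; simpl.
  rewrite firstn_app, Nat.sub_diag, firstn_all; simpl; apply app_nil_r.
Qed.

Lemma window_avoid_factor x u v :
  (forall r, window x r (length u) <> u) -> factor u v -> forall r, window x r (length v) <> v.
Proof.
  intros Hu Huv r E; rewrite <- E in Huv.
  destruct (factor_window x r (length v) u Huv) as [s Hs]; exact (Hu s Hs).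
Qed.

Lemma agree_of_window (c z : config A) s s' l (N : nat) :
  window c s' l = window z s l -> s <= - Z.of_nat N -> Z.of_nat N < s + Z.of_nat l ->
  agree z (shiftn (s' - s) c) N.
Proof.
  intros Hw H1 H2 i Hi; unfold shiftn.
  pose proof (window_eq_nth c z s' s l Hw (Z.to_nat (i - s)) ltac:(lia)) as E.
  rewrite Z2Nat.id in E by lia; replace (i + (s' - s)) with (s' + (i - s)) by lia.
  rewrite E; f_equal; lia.
Qed.

(* the default letter [d] is only read when [W] is empty *)
Definition periodize (W : list A) : config A :=
  fun i => nth (Z.to_nat (i mod Z.of_nat (length W))) W d.

Lemma periodize_add W i c : periodize W (i + c * Z.of_nat (length W)) = periodize W i.
Proof.
  unfold periodize; destruct (length W) eqn:E.
  - rewrite Z.mul_0_r, Z.add_0_r; reflexivity.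
  - rewrite Z_mod_plus_full; reflexivity.
Qed.

Lemma periodize_nth W (k : nat) : (k < length W)%nat -> periodize W (Z.of_nat k) = nth k W d.
Proof. intros H; unfold periodize; rewrite Z.mod_small, Nat2Z.id by lia; reflexivity. Qed.

Lemma window_periodize W c : (0 < length W)%nat ->
  window (periodize W) (c * Z.of_nat (length W)) (length W) = W.
Proof.
  intros H; apply nth_ext with (d := d) (d' := d); rewrite window_length; [reflexivity|].
  intros n Hn; rewrite window_nth, Z.add_comm, periodize_add by lia; apply periodize_nth; lia.
Qed.

Lemma factor_periodize W u : factor u W -> exists s, window (periodize W) s (length u) = u.
Proof.
  intros Hf; destruct (Nat.eq_dec (length W) 0) as [E|E].
  - destruct Hf as [a [b H]]; rewrite H, !length_app in E.
    exists 0; destruct u; [reflexivity | simpl in E; lia].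
  - rewrite <- (window_periodize W 0) in Hf by lia; exact (factor_window _ _ _ _ Hf).
Qed.

Lemma shiftn_periodize_mod W a : (0 < length W)%nat ->
  shiftn a (periodize W) = shiftn (a mod Z.of_nat (length W)) (periodize W).
Proof.
  intros HW; apply functional_extensionality; intro i; unfold shiftn, periodize.
  rewrite Z.add_mod_idemp_r by lia; reflexivity.
Qed.

Definition periodize_orbit (W : list A) : list (config A) :=
  map (fun k => shiftn (Z.of_nat k) (periodize W)) (seq 0 (length W)).

Lemma in_periodize_orbit W a :
  (0 < length W)%nat -> In (shiftn a (periodize W)) (periodize_orbit W).
Proof.
  intros HW; rewrite shiftn_periodize_mod by exact HW; apply in_map_iff.
  pose proof (Z.mod_pos_bound a (Z.of_nat (length W)) ltac:(lia)).
  exists (Z.to_nat (a mod Z.of_nat (length W))); split.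
  - rewrite Z2Nat.id by lia; reflexivity.
  - apply in_seq; lia.
Qed.

Lemma periodic_shiftn_periodize W a : (0 < length W)%nat -> periodic (shiftn a (periodize W)).
Proof.
  intros HW; exists (periodize_orbit W); intros y [n ->].
  rewrite shiftn_shiftn; apply in_periodize_orbit, HW.
Qed.

Lemma SFT_of_windows (Y : config A -> Prop) (F : list (list A)) (K : nat)
  (HF : forall x, Y x <-> (forall w i, In w F -> ~ occurs w x i))
  (HK : forall w, In w F -> (length w <= K)%nat) (x : config A) :
  (forall i, exists y j, Y y /\ window x i K = window y j K) -> Y x.
Proof.
  intros H; apply HF; intros w i Hw Hocc.
  destruct (H i) as [y [j [Hy Hwin]]].
  apply (proj1 (HF y) Hy w j Hw); intros k a Hk.
  assert (Hkl : (k < length w)%nat) by (apply nth_error_Some; congruence).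
  pose proof (HK w Hw).
  rewrite <- (window_eq_nth x y i j K Hwin k) by lia; exact (Hocc k a Hk).
Qed.

Lemma forbidden_length_bound (F : list (list A)) :
  exists K, (0 < K)%nat /\ forall w, In w F -> (length w <= K)%nat.
Proof.
  pose proof (proj1 (list_max_le (map (@length A) F) _) (le_n _)) as Hmax.
  rewrite Forall_forall in Hmax.
  exists (S (list_max (map (@length A) F))); split; [lia|].
  intros w Hw; specialize (Hmax _ (in_map _ _ _ Hw)); lia.
Qed.

Lemma SFT_shiftn (Y : config A -> Prop) : SFT Y -> forall n x, Y x -> Y (shiftn n x).
Proof.
  intros [F HF] n x Hx; apply HF; intros w i Hw Hocc.
  apply (proj1 (HF x) Hx w (i + n) Hw); intros k a Hk.
  rewrite <- (Hocc k a Hk); unfold shiftn; f_equal; lia.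
Qed.

Lemma relopen_cylinder (Y : config A -> Prop) (v : list A) :
  relopen Y (fun z => Y z /\ window z 0 (length v) = v).
Proof.
  split; [intros x [Hx _]; exact Hx|].
  intros x [Hx Hv]; exists (length v); intros y Hy Ha; split; [exact Hy|].
  etransitivity; [|exact Hv]; apply window_ext; intros k Hk; apply Ha; lia.
Qed.

(** * Tilings by a word *)

(* a limit point inherits a phase [t mod L] from its approximants *)
Lemma closed_lattice_property (L : Z) (HL : 0 < L) (Loc : Z -> config A -> Prop) (R : Z)
  (Hloc : forall s x y, (forall k, 0 <= k <= R -> x (s + k) = y (s + k)) -> Loc s x -> Loc s y) :
  closed (fun x => exists t, forall n, Loc (t + n * L) x).
Proof.
  intros x Hx; apply NNPP; intros Hno.
  assert (Hbad : forall t, exists n, ~ Loc (t + n * L) x).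
  { intros t; apply not_all_ex_not; intros Hall; apply Hno; exists t; exact Hall. }
  assert (HB : forall m : nat, exists B, forall t, 0 <= t < Z.of_nat m ->
             exists n, ~ Loc (t + n * L) x /\ Z.abs (t + n * L) + Z.abs R <= B).
  { induction m as [|m [B HB]]; [exists 0; intros t Ht; lia|].
    destruct (Hbad (Z.of_nat m)) as [n Hn].
    exists (Z.max B (Z.abs (Z.of_nat m + n * L) + Z.abs R)); intros t Ht.
    destruct (Z.eq_dec t (Z.of_nat m)) as [->|Hne].
    - exists n; split; [exact Hn | lia].
    - destruct (HB t ltac:(lia)) as [n' [Hn' Hb]]; exists n'; split; [exact Hn' | lia]. }
  destruct (HB (Z.to_nat L)) as [B HB'].
  destruct (Hx (Z.to_nat (Z.abs B))) as [y [[t Ht] Hagree]].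
  pose proof (Z.mod_pos_bound t L HL) as Hmod.
  destruct (HB' (t mod L) ltac:(lia)) as [n0 [Hn0 Hb0]].
  apply Hn0, (Hloc _ y x).
  - intros k Hk; apply Hagree; rewrite Z2Nat.id by lia; lia.
  - replace (t mod L + n0 * L) with (t + (n0 - t / L) * L) by (rewrite Z.mod_eq by lia; ring).
    apply Ht.
Qed.

Definition tiled (W : list A) (x : config A) (t : Z) : Prop :=
  forall n, window x (t + n * Z.of_nat (length W)) (length W) = W.

Lemma tiled_periodize W : (0 < length W)%nat -> tiled W (periodize W) 0.
Proof. intros H n; rewrite Z.add_0_l; apply window_periodize, H. Qed.

Lemma tiled_shiftn W x t m : tiled W x t -> tiled W (shiftn m x) (t - m).
Proof.
  intros H n; rewrite window_shiftn.
  replace (t - m + n * Z.of_nat (length W) + m) with (t + n * Z.of_nat (length W)) by lia.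
  apply H.
Qed.

Lemma tiled_eq_shiftn_periodize W x t :
  (0 < length W)%nat -> tiled W x t -> x = shiftn (- t) (periodize W).
Proof.
  intros HW H; apply functional_extensionality; intro i; unfold shiftn.
  set (L := Z.of_nat (length W)).
  pose proof (Z.mod_pos_bound (i - t) L ltac:(lia)) as Hk.
  pose proof (Z.div_mod (i - t) L ltac:(lia)) as Hdm.
  set (n := (i - t) / L) in *; set (k := (i - t) mod L) in *.
  replace i with (t + n * L + Z.of_nat (Z.to_nat k)) by lia.
  rewrite (window_eq_nth x (periodize W) (t + n * L) 0 (length W)).
  - replace (t + n * L + Z.of_nat (Z.to_nat k) + - t) with (0 + Z.of_nat (Z.to_nat k) + n * L)
      by lia.
    unfold L; rewrite periodize_add; reflexivity.
  - unfold L; rewrite H; symmetry; exact (window_periodize W 0 HW).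
  - lia.
Qed.

Lemma closed_tiled W : (0 < length W)%nat -> closed (fun x => exists t, tiled W x t).
Proof.
  intros HW; apply (closed_lattice_property (Z.of_nat (length W)) ltac:(lia)
           (fun s x => window x s (length W) = W) (Z.of_nat (length W))).
  intros s x y Hxy Hx; etransitivity; [|exact Hx].
  apply window_ext; intros k Hk; symmetry; apply Hxy; lia.
Qed.

Lemma window_pow_tiled W x t : (0 < length W)%nat -> tiled W x t ->
  forall k m, window x (t + m * Z.of_nat (length W)) (k * length W) = pow W k.
Proof.
  intros HW H k; induction k as [|k IH]; intros m; [reflexivity|].
  simpl mult; rewrite window_app, H; change (pow W (S k)) with (W ++ pow W k); f_equal.
  replace (t + m * Z.of_nat (length W) + Z.of_nat (length W))
    with (t + (m + 1) * Z.of_nat (length W)) by lia.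
  apply IH.
Qed.

Lemma tiled_pow W x t k : (0 < length W)%nat -> tiled W x t -> tiled (pow W k) x t.
Proof.
  intros HW H n; rewrite length_pow.
  replace (t + n * Z.of_nat (k * length W))
    with (t + (n * Z.of_nat k) * Z.of_nat (length W)) by lia.
  apply window_pow_tiled; assumption.
Qed.

Lemma periodize_pow (W : list A) k : (0 < length W)%nat -> (1 <= k)%nat ->
  periodize (pow W k) = periodize W.
Proof.
  intros HW Hk.
  pose proof (tiled_pow W (periodize W) 0 k HW (tiled_periodize W HW)) as Htiled.
  apply tiled_eq_shiftn_periodize in Htiled; [| rewrite length_pow; nia].
  rewrite Htiled; exact (eq_sym (shiftn_0 _)).
Qed.

Lemma window_two_blocks x s B B' (K : nat) : (0 < length B)%nat -> (K <= length B)%nat ->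
  firstn K B' = firstn K B -> window x s (length B + length B') = B ++ B' ->
  forall o : nat, (o < length B)%nat ->
    window x (s + Z.of_nat o) K = window (periodize B) (Z.of_nat o) K.
Proof.
  intros HB HK Hpre Hw o Ho.
  assert (HKB' : (K <= length B')%nat).
  { rewrite <- (firstn_length_le B HK), <- Hpre, length_firstn; lia. }
  assert (Hx : window x s (length B + K) = B ++ firstn K B).
  { rewrite <- (firstn_window x s (length B + length B')), Hw, firstn_app_2, Hpre by lia.
    reflexivity. }
  assert (Hp : window (periodize B) 0 (length B + K) = B ++ firstn K B).
  { rewrite window_app; f_equal; [exact (window_periodize B 0 HB)|].
    rewrite <- (firstn_window _ _ (length B)) by exact HK.
    replace (0 + Z.of_nat (length B)) with (1 * Z.of_nat (length B)) by lia.
    rewrite window_periodize by exact HB; reflexivity. }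
  rewrite <- Hp in Hx.
  exact (window_eq_sub _ _ _ _ (length B + K) o K ltac:(lia) Hx).
Qed.

(** * The hierarchy of words built on two blocks [P] and [M] *)

Section Hierarchy.
Variables P M : list A.

Fixpoint word (j : nat) (a : letter) : list A :=
  match j with
  | O => match a with Plain _ => P | Mark => M end
  | S j' => flat_map (word j') (expand j' a)
  end.

Fixpoint wlen (j : nat) : nat :=
  match j with O => length P | S j' => (block_length j' * wlen j')%nat end.

Definition admissible (j : nat) (v : list A) : Prop :=
  exists a b, allowed a b /\ v = word j a ++ word j b.

(* i.e. [x] is a concatenation of level-[j] words, cut at [t + wlen j * Z], with allowed
   neighbours *)
Definition level_tiled (j : nat) (x : config A) (t : Z) : Prop :=
  forall n : Z, admissible j (window x (t + n * Z.of_nat (wlen j)) (2 * wlen j)).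

Definition hierarchical (x : config A) : Prop := forall j, exists t, level_tiled j x t.

Lemma level_tiled_shiftn j x t m : level_tiled j x t -> level_tiled j (shiftn m x) (t - m).
Proof.
  intros H n; rewrite window_shiftn.
  replace (t - m + n * Z.of_nat (wlen j) + m) with (t + n * Z.of_nat (wlen j)) by lia.
  apply H.
Qed.

Lemma hierarchical_shiftn m x : hierarchical x -> hierarchical (shiftn m x).
Proof.
  intros H j; destruct (H j) as [t Ht]; exists (t - m); apply level_tiled_shiftn, Ht.
Qed.

Lemma hierarchical_invariant : invariant hierarchical.
Proof.
  intros x; split; [apply hierarchical_shiftn|].
  intros H; apply (hierarchical_shiftn (-1)) in H.
  rewrite shiftn_shiftn, shiftn_0 in H; exact H.
Qed.

Lemma word_plain_succ i j : (i <= j)%nat ->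
  word (S j) (Plain i) = pow (word j (Plain i)) (block_length j).
Proof.
  intros H; change (word (S j) (Plain i)) with (flat_map (word j) (expand j (Plain i))).
  unfold expand; rewrite (proj2 (Nat.leb_le i j) H); apply flat_map_repeat.
Qed.

Lemma word_plain_high i j : (j <= i)%nat -> word j (Plain i) = word j (Plain j).
Proof.
  intros H; destruct j as [|j]; [reflexivity|].
  change (flat_map (word j) (expand j (Plain i)) = flat_map (word j) (expand j (Plain (S j)))).
  unfold expand; rewrite (proj2 (Nat.leb_gt i j)), (proj2 (Nat.leb_gt (S j) j)) by lia.
  reflexivity.
Qed.

Definition plain_word (i : nat) : list A := word i (Plain i).

Definition clip (j : nat) (a : letter) : letter :=
  match a with Plain i => Plain (Nat.min i j) | Mark => Mark end.

Lemma word_clip j a : word j (clip j a) = word j a.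
Proof.
  destruct a as [i|]; [simpl|reflexivity].
  destruct (Nat.le_ge_cases i j) as [H|H].
  - rewrite Nat.min_l by exact H; reflexivity.
  - rewrite Nat.min_r by exact H; symmetry; apply word_plain_high, H.
Qed.

Lemma factor_admissible_word_mark j a b :
  allowed a b -> factor (word j a ++ word j b) (word (S j) Mark).
Proof.
  intros Hab; rewrite <- (word_clip j a), <- (word_clip j b).
  assert (Hclip : forall c i, clip j c = Plain i -> (i <= j)%nat)
    by (intros [k|] i E; [injection E as <-; lia | discriminate]).
  destruct (allowed_in_expand_mark j (clip j a) (clip j b)) as [pre [post E]];
    [| apply Hclip | apply Hclip |].
  - destruct Hab as [<- | [-> | ->]]; [left | right; left | right; right]; reflexivity.
  - change (word (S j) Mark) with (flat_map (word j) (expand j Mark)).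
    rewrite E; apply factor_flat_map.
Qed.

Lemma factor_word_mark_le j k : (j <= k)%nat -> factor (word j Mark) (word k Mark).
Proof.
  induction 1 as [|k _ IH]; [apply factor_refl|].
  apply (factor_trans _ _ _ IH); apply factor_app_l.
Qed.

Lemma factor_word_mark_plain_word j : factor (word j Mark) (plain_word (S j)).
Proof.
  unfold plain_word; change (word (S j) (Plain (S j)))
    with (flat_map (word j) (expand j (Plain (S j)))).
  unfold expand; rewrite (proj2 (Nat.leb_gt (S j) j)) by lia.
  replace (block_length j) with (S (3 * j + 4)) by (unfold block_length; lia).
  apply factor_app_l.
Qed.

Lemma word_plain0_pow j : exists c, (j < c)%nat /\ word j (Plain 0) = pow P c.
Proof.
  induction j as [|j [c [Hc E]]].
  - exists 1%nat; split; [lia|]; unfold pow; simpl; rewrite app_nil_r; reflexivity.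
  - exists (block_length j * c)%nat; split; [unfold block_length; nia|].
    rewrite word_plain_succ, E by lia; apply pow_mul.
Qed.

Hypothesis HP0 : (0 < length P)%nat.

Lemma wlen_gt j : (j < wlen j)%nat.
Proof. induction j as [|j IH]; simpl; [lia|]; unfold block_length; nia. Qed.

Hypothesis HPM : length M = length P.

Lemma length_word j a : length (word j a) = wlen j.
Proof.
  revert a; induction j as [|j IH]; intros a; simpl; [destruct a; auto|].
  rewrite (length_flat_map_const _ (wlen j)), length_expand by exact IH; reflexivity.
Qed.

Lemma length_word_pos j a : (0 < length (word j a))%nat.
Proof. rewrite length_word; pose proof (wlen_gt j); lia. Qed.

Lemma admissible_of_chain j e : chain e -> (2 <= length e)%nat ->
  admissible j (firstn (2 * wlen j) (flat_map (word j) e)).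
Proof.
  intros He Hl; destruct e as [|a [|b e]]; simpl in Hl; try lia.
  exists a, b; split; [simpl in He; tauto|].
  simpl flat_map; rewrite app_assoc, firstn_app, length_app, !length_word.
  replace (2 * wlen j - (wlen j + wlen j))%nat with 0%nat by lia.
  rewrite firstn_all2 by (rewrite length_app, !length_word; lia).
  simpl; apply app_nil_r.
Qed.

Lemma level_tiled_pred j x t : level_tiled (S j) x t -> level_tiled j x t.
Proof.
  intros H n.
  set (R := Z.of_nat (block_length j)); set (Lj := Z.of_nat (wlen j)).
  assert (HR : 2 <= R) by (unfold R, block_length; lia).
  pose proof (Z.mod_pos_bound n R ltac:(lia)) as Hrm.
  pose proof (Z.div_mod n R ltac:(lia)) as Hn.
  set (q := n / R) in *; set (r := Z.to_nat (n mod R)).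
  destruct (H q) as [a [b [Hab Hw]]].
  set (s := t + q * Z.of_nat (wlen (S j))) in Hw.
  replace (t + n * Lj) with (s + Z.of_nat (r * wlen j))
    by (unfold s, r, Lj, R in *; simpl wlen; rewrite !Nat2Z.inj_mul, Z2Nat.id by lia; lia).
  rewrite (window_sub x s (2 * wlen (S j))), Hw
    by (simpl wlen; unfold r, R in *; nia).
  simpl word; rewrite <- flat_map_app, (skipn_flat_map_const _ (wlen j)) by apply length_word.
  apply admissible_of_chain.
  - apply chain_skipn, chain_expand_allowed, Hab.
  - rewrite length_skipn, length_app, !length_expand; unfold r, R in *; lia.
Qed.

Lemma level_tiled_le j k x t : (j <= k)%nat -> level_tiled k x t -> level_tiled j x t.
Proof. induction 1; auto using level_tiled_pred. Qed.

Lemma closed_level_tiled j : closed (fun x => exists t, level_tiled j x t).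
Proof.
  pose proof (wlen_gt j).
  apply (closed_lattice_property (Z.of_nat (wlen j)) ltac:(lia)
           (fun s x => admissible j (window x s (2 * wlen j))) (Z.of_nat (2 * wlen j))).
  intros s x y Hxy Hx; replace (window y s (2 * wlen j)) with (window x s (2 * wlen j));
    [exact Hx|].
  apply window_ext; intros k Hk; apply Hxy; lia.
Qed.

Lemma hierarchical_closed : closed hierarchical.
Proof.
  intros x Hx j; apply closed_level_tiled; intros N.
  destruct (Hx N) as [y [Hy Ha]]; exists y; split; [apply Hy | exact Ha].
Qed.

Lemma level_tiled_of_tiled j a x t : tiled (word j a) x t -> level_tiled j x t.
Proof.
  intros H n; exists a, a; split; [left; reflexivity|].
  replace (2 * wlen j)%nat with (wlen j + wlen j)%nat by lia.
  rewrite window_app, <- (length_word j a), H.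
  replace (t + n * Z.of_nat (length (word j a)) + Z.of_nat (length (word j a)))
    with (t + (n + 1) * Z.of_nat (length (word j a))) by lia.
  rewrite H; reflexivity.
Qed.

Lemma tiled_word_plain i j x t : (i <= j)%nat ->
  tiled (word i (Plain i)) x t -> tiled (word j (Plain i)) x t.
Proof.
  induction 1 as [|j Hij IH]; [tauto|]; intros Hr.
  rewrite word_plain_succ by exact Hij.
  apply tiled_pow; [apply length_word_pos | exact (IH Hr)].
Qed.

Lemma hierarchical_periodize_plain i : hierarchical (periodize (plain_word i)).
Proof.
  pose proof (tiled_periodize _ (length_word_pos i (Plain i))) as Htiled.
  intros j; exists 0; destruct (Nat.le_gt_cases i j) as [Hij|Hij].
  - apply (level_tiled_of_tiled j (Plain i)), tiled_word_plain; assumption.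
  - apply (level_tiled_le j i); [lia|]; exact (level_tiled_of_tiled i (Plain i) _ _ Htiled).
Qed.

(** * The hierarchical subshift is CAM *)

Lemma hierarchical_window_in_mark z : hierarchical z -> forall N : nat,
  exists j s l, s <= - Z.of_nat N /\ Z.of_nat N < s + Z.of_nat l /\
    factor (window z s l) (word (S j) Mark).
Proof.
  intros Hz N; set (j := (2 * N)%nat); destruct (Hz j) as [t Ht].
  pose proof (wlen_gt j) as Hj; set (L := Z.of_nat (wlen j)) in *.
  pose proof (Z.div_mod (- Z.of_nat N - t) L ltac:(lia)) as Hdm.
  pose proof (Z.mod_pos_bound (- Z.of_nat N - t) L ltac:(lia)) as Hmb.
  set (n := (- Z.of_nat N - t) / L) in *.
  exists j, (t + n * L), (2 * wlen j)%nat; split; [|split].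
  - lia.
  - rewrite Nat2Z.inj_mul; fold L; unfold j in *; lia.
  - destruct (Ht n) as [a [b [Hab Hw]]]; fold L in Hw; rewrite Hw.
    apply factor_admissible_word_mark, Hab.
Qed.

Lemma hierarchical_approx_periodic z N : hierarchical z ->
  exists J0, forall J, (J0 <= J)%nat ->
    exists m, agree z (shiftn m (periodize (plain_word J))) N.
Proof.
  intros Hz; destruct (hierarchical_window_in_mark z Hz N) as [j [s [l [H1 [H2 Hf]]]]].
  exists (S (S j)); intros [|J] HJ; [lia|].
  assert (Hf' : factor (window z s l) (plain_word (S J))).
  { apply (factor_trans _ _ _ Hf), (factor_trans _ (word J Mark)).
    - apply factor_word_mark_le; lia.
    - apply factor_word_mark_plain_word. }
  destruct (factor_periodize _ _ Hf') as [s' Hs']; rewrite window_length in Hs'.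
  exists (s' - s); exact (agree_of_window _ z s s' l N Hs' H1 H2).
Qed.

Lemma hierarchical_dense_periodic : dense_periodic hierarchical.
Proof.
  intros U [HUs HU] [x Hx]; destruct (HU x Hx) as [N HN].
  destruct (hierarchical_approx_periodic x N (HUs x Hx)) as [J HJ].
  destruct (HJ J (le_n J)) as [m Hm].
  exists (shiftn m (periodize (plain_word J))); split.
  - apply HN; [apply hierarchical_shiftn, hierarchical_periodize_plain | exact Hm].
  - apply periodic_shiftn_periodize, length_word_pos.
Qed.

Lemma hierarchical_transitive : transitive hierarchical.
Proof.
  intros U V [HUs HU] [HVs HV] [x Hx] [y Hy].
  destruct (HU x Hx) as [N1 HN1]; destruct (HV y Hy) as [N2 HN2].
  destruct (hierarchical_approx_periodic x N1 (HUs x Hx)) as [J1 G1].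
  destruct (hierarchical_approx_periodic y N2 (HVs y Hy)) as [J2 G2].
  set (J := Nat.max J1 J2); set (q := periodize (plain_word J)).
  assert (Hq : forall m, hierarchical (shiftn m q))
    by (intros m; apply hierarchical_shiftn, hierarchical_periodize_plain).
  destruct (G1 J ltac:(lia)) as [m1 A1]; destruct (G2 J ltac:(lia)) as [m2 A2].
  exists (m2 - m1), (shiftn m1 q); split; [exact (HN1 _ (Hq m1) A1)|].
  rewrite shiftn_shiftn; replace (m2 - m1 + m1) with m2 by lia; exact (HN2 _ (Hq m2) A2).
Qed.

Lemma level_tiled_without_mark j x t : level_tiled j x t ->
  (forall s, window x s (wlen j) <> word j Mark) -> exists i, tiled (word j (Plain i)) x t.
Proof.
  intros Hc Hno.
  set (L := Z.of_nat (wlen j)); set (B := fun n => window x (t + n * L) (wlen j)).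
  assert (Hstep : forall n, B n = B (n + 1) /\ exists i, B n = word j (Plain i)).
  { intros n; destruct (Hc n) as [a [b [Hab Hw]]].
    replace (2 * wlen j)%nat with (wlen j + wlen j)%nat in Hw by lia.
    rewrite window_app in Hw; apply app_inv_length in Hw;
      [| rewrite window_length, length_word; reflexivity].
    fold L in Hw; replace (t + n * L + L) with (t + (n + 1) * L) in Hw by lia.
    destruct Hw as [Ea Eb]; fold (B n) in Ea; fold (B (n + 1)) in Eb.
    destruct a as [i|]; [| destruct (Hno _ Ea)].
    destruct Hab as [<- | [E | ->]]; [| discriminate | destruct (Hno _ Eb)].
    split; [congruence | exists i; exact Ea]. }
  assert (Hall : forall n, B n = B 0).
  { intros n; induction n using Z.peano_ind; [reflexivity| |].
    - rewrite <- IHn, <- Z.add_1_r; symmetry; apply Hstep.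
    - rewrite <- IHn; replace n with (Z.pred n + 1) at 2 by lia; apply Hstep. }
  destruct (proj2 (Hstep 0)) as [i Hi]; exists i; intros n.
  rewrite length_word; change (B n = word j (Plain i)); rewrite Hall; exact Hi.
Qed.

Lemma hierarchical_sub_of_marks (C : config A -> Prop) : closed C -> invariant C ->
  (forall J, exists c s, C c /\ window c s (wlen J) = word J Mark) ->
  forall z, hierarchical z -> C z.
Proof.
  intros Hcl Hinv HJ z Hz; apply Hcl; intros N.
  destruct (hierarchical_window_in_mark z Hz N) as [j [s [l [H1 [H2 Hf]]]]].
  destruct (HJ (S j)) as [c [s' [Hc Hs']]].
  destruct (factor_window c s' (wlen (S j)) (window z s l)) as [s'' Hs''];
    [rewrite Hs'; exact Hf|].
  rewrite window_length in Hs''.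
  exists (shiftn (s'' - s) c); split.
  - apply invariant_shiftn; assumption.
  - exact (agree_of_window c z s s'' l N Hs'' H1 H2).
Qed.

Lemma hierarchical_almost_minimal (C : config A -> Prop) :
  (forall x, C x -> hierarchical x) -> closed C -> invariant C ->
  (exists x, hierarchical x /\ ~ C x) -> finite_set C.
Proof.
  intros Hsub Hcl Hinv [z0 [Hz0 Hnz0]].
  assert (HJ : exists J, forall c s, C c -> window c s (wlen J) <> word J Mark).
  { apply NNPP; intros Hno; apply Hnz0, (hierarchical_sub_of_marks C Hcl Hinv); [|exact Hz0].
    intros J; apply NNPP; intros Hno2; apply Hno; exists J; intros c s Hc Hs.
    apply Hno2; exists c, s; split; assumption. }
  destruct HJ as [J HJ].
  exists (flat_map (fun i => periodize_orbit (word J (Plain i))) (seq 0 (S J))).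
  intros c Hc; destruct (Hsub c Hc J) as [t Ht].
  destruct (level_tiled_without_mark J c t Ht (fun s => HJ c s Hc)) as [i Hi].
  rewrite <- (word_clip J (Plain i)) in Hi; simpl clip in Hi.
  apply in_flat_map; exists (Nat.min i J); split; [apply in_seq; lia|].
  rewrite (tiled_eq_shiftn_periodize _ c t (length_word_pos _ _) Hi).
  apply in_periodize_orbit, length_word_pos.
Qed.

Lemma hierarchical_faithful :
  (forall r, window (periodize P) r (length P) <> M) -> faithful hierarchical.
Proof.
  intros HMavoid n Hn; apply NNPP; intros Hn0.
  set (k := Z.to_nat (Z.abs n)); set (q := periodize (plain_word (S (S k)))).
  assert (Hq : forall i, q (i + Z.abs n) = q i).
  { assert (Hqn : forall i, q (i + n) = q i)
      by (intros i; exact (f_equal (fun y => y i) (Hn q (hierarchical_periodize_plain _)))).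
    intros i; destruct (Z.abs_eq_or_opp n) as [-> | ->]; [apply Hqn|].
    rewrite <- (Hqn (i + - n)); f_equal; lia. }
  destruct (word_plain0_pow k) as [c [Hc Ec]].
  assert (FP : factor (pow P c) (plain_word (S (S k)))).
  { rewrite <- Ec; apply (factor_trans _ (word (S k) Mark)); [|apply factor_word_mark_plain_word].
    apply (factor_trans _ _ _ (factor_app_l _ (word k (Plain 0)))).
    apply factor_admissible_word_mark; left; reflexivity. }
  assert (FM : factor (word 0 Mark) (plain_word (S (S k)))).
  { apply (factor_trans _ (word (S k) Mark)); [apply factor_word_mark_le; lia|].
    apply factor_word_mark_plain_word. }
  destruct (factor_periodize _ _ FP) as [s1 Hs1]; destruct (factor_periodize _ _ FM) as [s2 Hs2].
  fold q in Hs1, Hs2; rewrite length_pow in Hs1; simpl word in Hs2; rewrite HPM in Hs2.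
  (* [pow P c] is long enough to contain a copy of [P] at every phase modulo [n] *)
  pose proof (Z.mod_pos_bound (s2 - s1) (Z.abs n) ltac:(lia)) as He.
  pose proof (Z.div_mod (s2 - s1) (Z.abs n) ltac:(lia)) as Hdm.
  set (e := (s2 - s1) mod Z.abs n) in *.
  apply (HMavoid e); rewrite <- Hs2.
  replace s2 with (s1 + Z.of_nat (Z.to_nat e) + (s2 - s1) / Z.abs n * Z.abs n) by lia.
  rewrite (window_periodic q _ Hq).
  rewrite <- (window_pow_tiled P (periodize P) 0 HP0 (tiled_periodize P HP0) c 0) in Hs1.
  assert (Hfit : (Z.to_nat e + length P <= c * length P)%nat)
    by (assert (Z.to_nat e < c)%nat; nia).
  rewrite (window_eq_sub _ _ _ _ _ _ _ Hfit Hs1).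
  f_equal; lia.
Qed.

Lemma hierarchical_CAM :
  (forall r, window (periodize P) r (length P) <> M) -> CAM hierarchical.
Proof.
  intros HMavoid; repeat split.
  - apply hierarchical_transitive.
  - apply hierarchical_faithful, HMavoid.
  - apply hierarchical_dense_periodic.
  - apply hierarchical_almost_minimal.
Qed.

End Hierarchy.

(** * Loops in a mixing shift of finite type *)

Lemma periodize_window z l m : (0 < l)%nat ->
  periodize (window z 0 l) m = z (m mod Z.of_nat l).
Proof.
  intros Hl; pose proof (Z.mod_pos_bound m (Z.of_nat l) ltac:(lia)).
  unfold periodize; rewrite window_length, window_nth by lia.
  rewrite Z2Nat.id by lia; reflexivity.
Qed.

Definition glue (x y : config A) (n : Z) : config A :=
  fun i => if i <? n then x i else y (i - n).

Lemma window_glue_l x y n s l : s + Z.of_nat l <= n -> window (glue x y n) s l = window x s l.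
Proof.
  intros H; apply window_ext; intros k Hk; unfold glue.
  destruct (Z.ltb_spec (s + Z.of_nat k) n); [reflexivity | lia].
Qed.

Lemma window_glue_r x y n s l : n <= s -> window (glue x y n) s l = window y (s - n) l.
Proof.
  intros H; apply window_ext; intros k Hk; unfold glue.
  destruct (Z.ltb_spec (s + Z.of_nat k) n); [lia | f_equal; lia].
Qed.

Section Loops.
Variable Y : config A -> Prop.
Variable F : list (list A).
Hypothesis HF : forall x, Y x <-> (forall w i, In w F -> ~ occurs w x i).
Variable K : nat.
Hypothesis HK : forall w, In w F -> (length w <= K)%nat.

Lemma SFT_glue x y n : Y x -> Y y -> window x n K = window y 0 K -> Y (glue x y n).
Proof.
  intros Hx Hy Hxy; apply (SFT_of_windows Y F K HF HK); intros i.
  destruct (Z.ltb_spec i n) as [Hi|Hi]; [exists x, i | exists y, (i - n)]; split; auto.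
  - apply window_ext; intros k Hk; unfold glue.
    destruct (Z.ltb_spec (i + Z.of_nat k) n); [reflexivity|].
    pose proof (window_eq_nth x y n 0 K Hxy (Z.to_nat (i + Z.of_nat k - n)) ltac:(lia)) as E.
    rewrite Z2Nat.id in E by lia.
    replace (i + Z.of_nat k - n) with (0 + (i + Z.of_nat k - n)) by lia.
    rewrite <- E; f_equal; lia.
  - apply window_glue_r, Hi.
Qed.

Lemma escape_word p : ~ finite_set Y -> (0 < length p)%nat ->
  exists w, (K <= length w)%nat /\ (exists y, Y y /\ window y 0 (length w) = w) /\
    forall r, window (periodize p) r (length w) <> w.
Proof.
  intros Hinf Hp.
  assert (Hy1 : exists y1, Y y1 /\ ~ exists t, tiled p y1 t).
  { apply NNPP; intros Hno; apply Hinf; exists (periodize_orbit p); intros x Hx.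
    destruct (classic (exists t, tiled p x t)) as [[t Ht]|Hn].
    - rewrite (tiled_eq_shiftn_periodize p x t Hp Ht); apply in_periodize_orbit, Hp.
    - destruct Hno; exists x; split; assumption. }
  destruct Hy1 as [y1 [Hy1 Hy1n]].
  assert (HN : exists N, forall y, (exists t, tiled p y t) -> ~ agree y1 y N).
  { apply NNPP; intros Hno; apply Hy1n, (closed_tiled p Hp); intros N.
    apply NNPP; intros Hno2; apply Hno; exists N; intros y Hy Ha.
    apply Hno2; exists y; split; assumption. }
  destruct HN as [N HN]; set (N' := Z.of_nat (N + K)).
  exists (window y1 (- N') (2 * (N + K) + 1)); rewrite window_length; repeat split.
  - lia.
  - exists (shiftn (- N') y1); split.
    + apply (SFT_shiftn Y (ex_intro _ F HF)), Hy1.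
    + rewrite window_shiftn; reflexivity.
  - intros r E; apply (HN (shiftn (r - - N') (periodize p))).
    + exists (0 - (r - - N')); apply tiled_shiftn, tiled_periodize, Hp.
    + apply (agree_of_window _ y1 (- N') r (2 * (N + K) + 1)); [exact E | lia | lia].
Qed.

Hypothesis HK0 : (0 < K)%nat.

Lemma hierarchical_in_SFT P M : length M = length P -> (K <= length P)%nat ->
  Y (periodize P) -> Y (periodize M) -> firstn K M = firstn K P ->
  forall x, hierarchical P M x -> Y x.
Proof.
  intros HPM HKP HYP HYM Hpre x Hx; destruct (Hx 0%nat) as [t Ht].
  assert (Hblock : forall a, Y (periodize (word P M 0 a)) /\ length (word P M 0 a) = length P
                             /\ firstn K (word P M 0 a) = firstn K P)
    by (intros [i|]; simpl; auto).
  apply (SFT_of_windows Y F K HF HK); intros i.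
  set (L := Z.of_nat (length P)).
  pose proof (Z.div_mod (i - t) L ltac:(lia)) as Hdm.
  pose proof (Z.mod_pos_bound (i - t) L ltac:(lia)) as Hmb.
  set (q := (i - t) / L) in *; set (o := (i - t) mod L) in *.
  destruct (Ht q) as [a [b [_ Hw]]]; simpl wlen in Hw; fold L in Hw.
  destruct (Hblock a) as [HYa [Hla Hpa]]; destruct (Hblock b) as [_ [Hlb Hpb]].
  exists (periodize (word P M 0 a)), o; split; [exact HYa|].
  replace i with (t + q * L + Z.of_nat (Z.to_nat o)) by lia.
  rewrite (window_two_blocks _ _ (word P M 0 a) (word P M 0 b)); rewrite ?Hla; try lia.
  - rewrite Z2Nat.id by lia; reflexivity.
  - congruence.
  - rewrite Hlb, <- Hw; f_equal; lia.
Qed.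

(* every [K]-window of the periodization is a [K]-window of [z], since [z] repeats its
   first [K] letters at [l] *)
Lemma periodize_loop_in_SFT z (l : nat) : Y z ->
  window z 0 K = window z (Z.of_nat l) K -> (K <= l)%nat -> Y (periodize (window z 0 l)).
Proof.
  intros Hz Hs Hl; apply (SFT_of_windows Y F K HF HK); intros i.
  exists z, (i mod Z.of_nat l); split; [exact Hz|].
  pose proof (Z.mod_pos_bound i (Z.of_nat l) ltac:(lia)) as Hr.
  set (r := i mod Z.of_nat l) in *; set (L := Z.of_nat l) in *.
  apply window_ext; intros k Hk.
  rewrite periodize_window, <- Z.add_mod_idemp_l by lia; fold r L.
  destruct (Z_lt_le_dec (r + Z.of_nat k) L).
  - rewrite Z.mod_small by lia; reflexivity.
  - rewrite <- (Z.mod_add _ (-1)), Z.mod_small by lia.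
    pose proof (window_eq_nth z z 0 L K Hs (Z.to_nat (r + Z.of_nat k - L)) ltac:(lia)) as E.
    rewrite Z2Nat.id in E by lia; fold r.
    replace (r + Z.of_nat k + -1 * L) with (0 + (r + Z.of_nat k - L)) by lia.
    rewrite E; f_equal; lia.
Qed.

(* [M] contains [w], which [periodize p] avoids: this is what makes the subsystem
   faithful *)
Lemma CAM_subsystem_of_loops p c w : (K <= length p)%nat -> (K <= length c)%nat ->
  firstn K c = firstn K p -> Y (periodize p) -> Y (periodize c) ->
  factor w c -> (forall r, window (periodize p) r (length w) <> w) ->
  exists Zs : config A -> Prop, (forall x, Zs x -> Y x) /\ closed Zs /\ invariant Zs /\ CAM Zs.
Proof.
  intros Hp Hc Hpre HYp HYc Hwc Hw.
  set (P := pow p (length c)); set (M := pow c (length p)).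
  assert (HPM : length M = length P) by (unfold P, M; rewrite !length_pow; lia).
  assert (HP0 : (0 < length P)%nat) by (unfold P; rewrite length_pow; nia).
  assert (HperP : periodize P = periodize p) by (apply periodize_pow; lia).
  assert (HperM : periodize M = periodize c) by (apply periodize_pow; lia).
  exists (hierarchical P M); split; [|split; [|split]].
  - apply hierarchical_in_SFT; try congruence.
    + unfold P; rewrite length_pow; nia.
    + unfold P, M; rewrite !firstn_pow by lia; exact Hpre.
  - apply hierarchical_closed; assumption.
  - exact (hierarchical_invariant P M).
  - apply hierarchical_CAM; [exact HP0 | exact HPM |].
    intros r; rewrite HperP, <- HPM.
    apply (window_avoid_factor _ w); [exact Hw|].
    apply (factor_trans _ c _ Hwc), factor_pow; lia.
Qed.

Hypothesis Hmix : mixing Y.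

(* mixing gives an orbit from the cylinder of [s] to that of [w] and one back; glued along
   [w] they form a loop through [s] *)
Lemma mixing_loop s w : length s = K -> (K <= length w)%nat ->
  (exists y, Y y /\ window y 0 (length s) = s) -> (exists y, Y y /\ window y 0 (length w) = w) ->
  exists c, (K <= length c)%nat /\ firstn K c = s /\ factor w c /\ Y (periodize c).
Proof.
  intros Hs Hw HU HV.
  destruct (Hmix _ _ (relopen_cylinder Y s) (relopen_cylinder Y w) HU HV) as [N1 HN1].
  destruct (HN1 (N1 + K)%nat ltac:(lia)) as [z1 [[Hz1 Hz1s] [_ Hz1w]]].
  destruct (Hmix _ _ (relopen_cylinder Y w) (relopen_cylinder Y s) HV HU) as [N2 HN2].
  destruct (HN2 (N2 + length w)%nat ltac:(lia)) as [z2 [[Hz2 Hz2w] [_ Hz2s]]].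
  rewrite window_shiftn, Z.add_0_l in Hz1w, Hz2s; rewrite Hs in Hz1s, Hz2s.
  set (n1 := (N1 + K)%nat) in *; set (n2 := (N2 + length w)%nat) in *.
  set (g := glue z1 z2 (Z.of_nat n1)).
  assert (Hg : Y g).
  { apply SFT_glue; [exact Hz1 | exact Hz2|].
    rewrite <- (firstn_window z1 _ (length w)), <- (firstn_window z2 0 (length w)) by exact Hw.
    rewrite Hz1w, Hz2w; reflexivity. }
  assert (Hg0 : window g 0 K = s)
    by (unfold g; rewrite window_glue_l by lia; exact Hz1s).
  assert (Hgw : window g (0 + Z.of_nat n1) (length w) = w)
    by (unfold g; rewrite window_glue_r by lia; etransitivity; [|exact Hz2w]; f_equal; lia).
  assert (Hgl : window g (Z.of_nat (n1 + n2)) K = s)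
    by (unfold g; rewrite window_glue_r by lia; etransitivity; [|exact Hz2s]; f_equal; lia).
  exists (window g 0 (n1 + n2)); repeat split.
  - rewrite window_length; lia.
  - rewrite firstn_window by lia; exact Hg0.
  - rewrite <- Hgw; apply factor_window_sub; lia.
  - apply periodize_loop_in_SFT; [exact Hg | rewrite Hg0, Hgl; reflexivity | lia].
Qed.

End Loops.

End Configurations.

Theorem theorem2p9 (A : Type) (HA : exists l : list A, forall a : A, In a l)
  (Y : config A -> Prop) (HY : SFT Y) (Hinf : ~ finite_set Y) (Hmix : mixing Y) :
  exists Zs : config A -> Prop,
    (forall x, Zs x -> Y x) /\ closed Zs /\ invariant Zs /\ CAM Zs.
Proof.
  destruct HY as [F HF].
  destruct (forbidden_length_bound A F) as [K [HK0 HK]].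
  destruct (classic (exists y, Y y)) as [[y0 Hy0] | Hempty];
    [| destruct Hinf; exists []; intros x Hx; destruct Hempty; exists x; exact Hx].
  set (d := y0 0); set (s := window A y0 0 K).
  assert (Hs : length s = K) by apply window_length.
  assert (HU : exists y, Y y /\ window A y 0 (length s) = s)
    by (exists y0; rewrite Hs; split; [exact Hy0 | reflexivity]).
  destruct (mixing_loop A d Y F HF K HK HK0 Hmix s s Hs ltac:(lia) HU HU)
    as [p [Hp [Hps [_ HYp]]]].
  destruct (escape_word A d Y F HF K p Hinf ltac:(lia)) as [w [Hw [HV Hwp]]].
  destruct (mixing_loop A d Y F HF K HK HK0 Hmix s w Hs Hw HU HV)
    as [c [Hc [Hcs [Hwc HYc]]]].
  exact (CAM_subsystem_of_loops A d Y F HF K HK HK0 p c w Hp Hc ltac:(congruence) HYp HYc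
           Hwc Hwp).
Qed.
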